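(* Assume $\mathrm{char}(\Bbbk)\ne2$. The set $\{M_\alpha\}_{\alpha\text{ even}}$ is a linear basis for the even subalgebra $\Pi_+$ of $(\mathcal{Q}\mathit{Sym},\zeta_{\mathcal Q})$.
   Context: $\mathcal{Q}\mathit{Sym}$ is the graded Hopf algebra of quasi-symmetric functions over $\Bbbk$ with basis $M_\alpha=\sum_{i_1<\cdots<i_k}x_{i_1}^{a_1}\cdots x_{i_k}^{a_k}$ for compositions $\alpha=(a_1,\dots,a_k)$ (degree $a_1+\cdots+a_k$; $M_{()}=1$), coproduct $\Delta(M_\alpha)=\sum_{\alpha=\beta\gamma}M_\beta\otimes M_\gamma$. $\zeta_{\mathcal Q}$ is the character with $\zeta_{\mathcal Q}(M_\alpha)=1$ if $\alpha=(n)$ or $()$, $0$ otherwise. $\bar\zeta_{\mathcal Q}(h)=(-1)^n\zeta_{\mathcal Q}(h)$ for $h$ of degree $n$. $\Pi_+$ is the largest graded subcoalgebra of $\mathcal{Q}\mathit{Sym}$ on which $\bar\zeta_{\mathcal Q}=\zeta_{\mathcal Q}$. A composition is even if all its parts are even (the empty composition counts as even). *)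

From HB Require Import structures.
From mathcomp Require Import all_boot all_order all_algebra.
From mathcomp Require Import boolp classical_sets fsbigop.
Set Implicit Arguments. Unset Strict Implicit. Unset Printing Implicit Defensive.
Import Order.TTheory GRing.Theory Num.Theory.
Local Open Scope classical_set_scope.
Local Open Scope ring_scope.

Definition composition (a : seq nat) : bool := all (fun x => 0 < x)%N a.
Definition even_comp (a : seq nat) : bool := all (fun x => ~~ odd x) a.

(* An element of QSym over k is encoded by its coordinate function in the
   monomial basis: h = \sum_alpha h(alpha) M_alpha, with finite support
   contained in the set of compositions. *)
Definition qfun (k : fieldType) := seq nat -> k.

Definition is_qsym (k : fieldType) (f : qfun k) : Prop :=
  (exists s : seq (seq nat), forall a, f a != 0 -> a \in s) /\
  (forall a, f a != 0 -> composition a).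

Definition Mq (k : fieldType) (a : seq nat) : qfun k := fun b => (b == a)%:R.

Definition homog_part (k : fieldType) (n : nat) (f : qfun k) : qfun k :=
  fun a => if sumn a == n then f a else 0.

(* Elements of QSym (x) QSym, in the basis M_beta (x) M_gamma. *)
Definition tens (k : fieldType) (f g : qfun k) : seq nat * seq nat -> k :=
  fun p => f p.1 * g p.2.

(* Coproduct: Delta(M_alpha) = sum_{alpha = beta gamma} M_beta (x) M_gamma,
   so the coefficient of M_beta (x) M_gamma in Delta h is h(beta ++ gamma). *)
Definition coprodQ (k : fieldType) (f : qfun k) : seq nat * seq nat -> k :=
  fun p => f (p.1 ++ p.2).

(* zeta_Q(M_alpha) = 1 iff alpha = (n) or (); extended linearly. *)
Definition zetaQ (k : fieldType) (f : qfun k) : k :=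
  \sum_(a \in [set a : seq nat | (size a <= 1)%N]) f a.

(* zetabar_Q(h) = (-1)^n zeta_Q(h) for h homogeneous of degree n. *)
Definition zetabarQ (k : fieldType) (f : qfun k) : k :=
  \sum_(a \in [set a : seq nat | (size a <= 1)%N]) ((-1) ^+ sumn a * f a).

Definition qsubspace (k : fieldType) (C : qfun k -> Prop) : Prop :=
  [/\ forall f, C f -> is_qsym f,
      C (fun _ => 0),
      forall f g, C f -> C g -> C (fun a => f a + g a) &
      forall (c : k) f, C f -> C (fun a => c * f a)].

Definition qgraded (k : fieldType) (C : qfun k -> Prop) : Prop :=
  forall f n, C f -> C (homog_part n f).

(* Delta(C) is contained in C (x) C = span { c (x) c' : c, c' in C }. *)
Definition qsubcoalg (k : fieldType) (C : qfun k -> Prop) : Prop :=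
  forall f, C f -> exists s : seq (qfun k * qfun k),
    (forall x, x \in s -> C x.1 /\ C x.2) /\
    forall p, coprodQ f p = \sum_(x <- s) tens x.1 x.2 p.

Definition even_subcoalg (k : fieldType) (C : qfun k -> Prop) : Prop :=
  [/\ qsubspace C, qgraded C, qsubcoalg C &
      forall f, C f -> zetabarQ f = zetaQ f].

(* Pi_+ : the largest such subcoalgebra, i.e. the union (= sum) of all of them. *)
Definition Pi_plus (k : fieldType) (f : qfun k) : Prop :=
  exists C : qfun k -> Prop, even_subcoalg C /\ C f.

Definition even_span (k : fieldType) (f : qfun k) : Prop :=
  exists (s : seq (seq nat)) (c : seq nat -> k),
    (forall a, a \in s -> composition a && even_comp a) /\
    forall b, f b = \sum_(a <- s) c a * Mq k a b.

Definition even_M_free (k : fieldType) : Prop :=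
  forall (s : seq (seq nat)) (c : seq nat -> k),
    uniq s -> (forall a, a \in s -> composition a && even_comp a) ->
    (forall b, \sum_(a <- s) c a * Mq k a b = 0) ->
    forall a, a \in s -> c a = 0.

From mathcomp Require Import all_boot all_order all_algebra.
From mathcomp Require Import boolp classical_sets fsbigop.
Set Implicit Arguments. Unset Strict Implicit. Unset Printing Implicit Defensive.
Import GRing.Theory.
Local Open Scope classical_set_scope.
Local Open Scope ring_scope.

(** Deconcatenating an even composition gives even compositions, and an even
composition has even degree, so the span of the even [M_alpha] is a graded
subcoalgebra on which [zetabar = zeta].  Conversely, if [(a_1, ..., a_l)]
occurs in some [g] of such a subcoalgebra [C], then the coefficient of
[M_(a_1) (x) M_(a_2, ..., a_l)] in [Delta g] is nonzero, so some [c (x) c']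
with [c, c'] in [C] has [c(a_1) <> 0] and [c'(a_2, ..., a_l) <> 0].  By
induction [(a_2, ..., a_l)] is even, and [zetabar = zeta] on the degree-[a_1]
part of [c] reads [(-1)^a_1 c(a_1) = c(a_1)], which forces [a_1] to be even
when [2 <> 0]. *)

Lemma all_subseq (T : eqType) (P : pred T) (s1 s2 : seq T) :
  subseq s1 s2 -> all P s2 -> all P s1.
Proof. by move=> /mem_subseq sub12 /allP P2; apply/allP => x /sub12 /P2. Qed.

Lemma even_comp_sumn (a : seq nat) : even_comp a -> ~~ odd (sumn a).
Proof.
elim: a => [|x a IHa] //= /andP[ev_x /IHa ev_a].
by rewrite oddD (negPf ev_x) (negPf ev_a).
Qed.

Lemma sum_mul_indicator (R : pzSemiRingType) (T : eqType) (s : seq T)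
    (c : T -> R) (b : T) :
  uniq s -> \sum_(a <- s) c a * (b == a)%:R = if b \in s then c b else 0.
Proof.
elim: s => [|x s IHs] /=; first by rewrite big_nil.
case/andP => x_notin_s uniq_s; rewrite big_cons IHs // inE.
have [->|neq_bx] /= := eqVneq b x; last by rewrite mulr0 add0r.
by rewrite (negPf x_notin_s) mulr1 addr0.
Qed.

Lemma sum_neq0_exists (R : nmodType) (I : eqType) (s : seq I) (F : I -> R) :
  \sum_(i <- s) F i != 0 -> exists2 i, i \in s & F i != 0.
Proof.
move=> sum_neq0; apply/hasP; apply: contraNT sum_neq0 => /hasPn F0.
by rewrite big1_seq // => i /F0; rewrite negbK => /eqP.
Qed.

Section EvenSpan.

Variable k : fieldType.

Definition supported (P : seq nat -> Prop) (f : qfun k) : Prop :=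
  forall a, f a != 0 -> P a.

Lemma supported_sub (P Q : seq nat -> Prop) (f : qfun k) :
  (forall a, P a -> Q a) -> supported P f -> supported Q f.
Proof. by move=> PQ Pf a /Pf /PQ. Qed.

Lemma supported0 (P : seq nat -> Prop) : supported P (fun _ => 0).
Proof. by move=> a; rewrite eqxx. Qed.

Lemma supportedD (P : seq nat -> Prop) (f g : qfun k) :
  supported P f -> supported P g -> supported P (fun a => f a + g a).
Proof.
move=> Pf Pg a; have [fa0|/Pf //] := eqVneq (f a) 0.
by rewrite fa0 add0r => /Pg.
Qed.

Lemma supportedZ (P : seq nat -> Prop) (c : k) (f : qfun k) :
  supported P f -> supported P (fun a => c * f a).
Proof. by move=> Pf a; rewrite mulf_eq0 negb_or => /andP[_ /Pf]. Qed.

Lemma supported_homog (P : seq nat -> Prop) (n : nat) (f : qfun k) :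
  supported P f -> supported P (homog_part n f).
Proof.
by move=> Pf a; rewrite /homog_part; case: ifP => _; [apply: Pf | rewrite eqxx].
Qed.

Lemma Mq_expansion (s : seq (seq nat)) (f : qfun k) :
  supported (fun a => a \in s) f ->
  forall b, f b = \sum_(a <- [seq a <- undup s | f a != 0]) f a * Mq k a b.
Proof.
move=> supp_s b; rewrite sum_mul_indicator ?filter_uniq ?undup_uniq //.
rewrite mem_filter mem_undup; have [->|fb_neq0] //= := eqVneq (f b) 0.
by rewrite supp_s.
Qed.

Lemma even_spanP (f : qfun k) :
  even_span f <-> is_qsym f /\ supported (fun a => even_comp a) f.
Proof.
split=> [[s [c [s_even f_def]]]|[[[s supp_s] comp_f] even_f]].
  have supp_s : supported (fun a => a \in s) f.
    move=> b; apply: contraR => b_notin_s.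
    rewrite f_def big1_seq // => a /andP[_ a_in_s].
    rewrite /Mq; have [ba|_] := eqVneq b a; last by rewrite mulr0.
    by rewrite ba a_in_s in b_notin_s.
  by split; first split; first exists s; move=> // a /supp_s /s_even /andP[].
exists [seq a <- undup s | f a != 0], f; split.
  by move=> a; rewrite mem_filter => /andP[/[dup] /comp_f -> /even_f].
exact: Mq_expansion.
Qed.

Lemma even_span_Mq (a : seq nat) :
  composition a -> even_comp a -> even_span (Mq k a).
Proof.
move=> comp_a even_a; exists [:: a], (fun _ => 1); split=> b.
  by rewrite inE => /eqP ->; apply/andP.
by rewrite big_seq1 mul1r.
Qed.

Lemma even_span_subspace : qsubspace (@even_span k).
Proof.
split.
- by move=> f /even_spanP[].
- by apply/even_spanP; split; first split; try exists [::]; apply: supported0.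
- move=> f g /even_spanP[[[s supp_s] comp_f] even_f].
  move=> /even_spanP[[[t supp_t] comp_g] even_g].
  apply/even_spanP; split; first split; last exact: supportedD.
    exists (s ++ t); apply: supportedD.
      by apply: supported_sub supp_s => a; rewrite mem_cat => ->.
    by apply: supported_sub supp_t => a; rewrite mem_cat orbC => ->.
  exact: supportedD.
- move=> c f /even_spanP[[[s supp_s] comp_f] even_f].
  by apply/even_spanP; split; first split; try exists s; apply: supportedZ.
Qed.

Lemma even_span_graded : qgraded (@even_span k).
Proof.
move=> f n /even_spanP[[[s supp_s] comp_f] even_f].
by apply/even_spanP; split; first split; try exists s; apply: supported_homog.
Qed.

Lemma eq_take_drop (a p1 p2 : seq nat) (i : nat) : (i <= size a)%N ->
  (p1 == take i a) && (p2 == drop i a) = (p1 ++ p2 == a) && (size p1 == i).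
Proof.
move=> le_i_a; have size_take : size (take i a) = i by rewrite size_takel.
have [size_p1|] := eqVneq (size p1) i.
  by rewrite andbT -{3}(cat_take_drop i a) eqseq_cat // size_take.
move=> neq_p1_i; rewrite andbF; apply: contraNF neq_p1_i.
by move=> /andP[/eqP -> _]; rewrite size_take.
Qed.

Lemma coprod_Mq (a p1 p2 : seq nat) :
  \sum_(i <- iota 0 (size a).+1) Mq k (take i a) p1 * Mq k (drop i a) p2 =
  Mq k a (p1 ++ p2).
Proof.
rewrite (eq_big_seq (fun i => (p1 ++ p2 == a)%:R * (size p1 == i)%:R));
  last first.
  move=> i; rewrite mem_iota ltnS => /andP[_ le_i_a].
  by rewrite /Mq -!natrM !mulnb eq_take_drop.
rewrite sum_mul_indicator ?iota_uniq // mem_iota ltnS /Mq.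
have [<-|] := eqVneq (p1 ++ p2) a; last by case: ifP; rewrite ?mul0r.
by rewrite size_cat leq_addr.
Qed.

Lemma even_span_subcoalg_coprod : qsubcoalg (@even_span k).
Proof.
move=> f /even_spanP[[[s supp_s] comp_f] even_f].
have [_ _ _ even_spanZ] := even_span_subspace.
set su := [seq a <- undup s | f a != 0].
have su_even a : a \in su -> composition a && even_comp a.
  by rewrite mem_filter => /andP[/[dup] /comp_f -> /even_f].
exists [seq ((fun b => f a * Mq k (take i a) b), Mq k (drop i a))
         | a <- su, i <- iota 0 (size a).+1]; split.
  move=> _ /allpairsPdep[a [i [/su_even /andP[comp_a even_a] _ ->]]] /=.
  move: comp_a even_a; rewrite /composition /even_comp => comp_a even_a.
  split; last by apply: even_span_Mq; apply: all_subseq (drop_subseq _ _) _.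
  by apply/even_spanZ/even_span_Mq; apply: all_subseq (take_subseq _ _) _.
move=> [p1 p2]; rewrite /coprodQ /tens big_allpairs_dep /=.
rewrite [LHS](Mq_expansion supp_s).
apply: eq_bigr => a _; rewrite -coprod_Mq mulr_sumr.
by apply: eq_bigr => i _; rewrite mulrA.
Qed.

Lemma zetabarQ_even (f : qfun k) :
  supported (fun a => even_comp a) f -> zetabarQ f = zetaQ f.
Proof.
move=> even_f; apply: eq_fsbigr => a _.
have [->|/even_f even_a] := eqVneq (f a) 0; first by rewrite mulr0.
by rewrite -signr_odd (negPf (even_comp_sumn even_a)) mul1r.
Qed.

Lemma even_span_subcoalg : even_subcoalg (@even_span k).
Proof.
split; [exact: even_span_subspace | exact: even_span_graded |
        exact: even_span_subcoalg_coprod | ].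
by move=> f /even_spanP[_ /zetabarQ_even].
Qed.

Lemma even_Mq_free : even_M_free k.
Proof.
move=> s c uniq_s _ sum_eq0 a a_in_s.
by have := sum_eq0 a; rewrite sum_mul_indicator // a_in_s.
Qed.

Lemma fsbig_size_le1_homog (F : seq nat -> k) (f : qfun k) (n : nat) :
  (0 < n)%N -> (forall a, homog_part n f a = 0 -> F a = 0) ->
  \sum_(a \in [set a : seq nat | (size a <= 1)%N]) F a = F [:: n].
Proof.
move=> n_gt0 F0; rewrite -(fsbig_widen [set [:: n]]) ?fsbig_set1 //.
  by move=> a /= ->.
move=> a [/= size_a neq_a_n]; apply: F0; rewrite /homog_part.
case: eqP => // sum_a; exfalso.
case: a size_a sum_a neq_a_n => [|b []] //= _.
  by move=> n0; rewrite -n0 in n_gt0.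
by rewrite addn0 => ->.
Qed.

Lemma zetaQ_homog (f : qfun k) (n : nat) :
  (0 < n)%N -> zetaQ (homog_part n f) = f [:: n].
Proof.
move=> n_gt0; rewrite /zetaQ (@fsbig_size_le1_homog _ f _ n_gt0) //.
by rewrite /homog_part /= addn0 eqxx.
Qed.

Lemma zetabarQ_homog (f : qfun k) (n : nat) :
  (0 < n)%N -> zetabarQ (homog_part n f) = (-1) ^+ n * f [:: n].
Proof.
move=> n_gt0; rewrite /zetabarQ (@fsbig_size_le1_homog _ f _ n_gt0); last first.
  by move=> a ->; rewrite mulr0.
by rewrite /homog_part /= addn0 eqxx.
Qed.

Section EvenSubcoalgebra.

Hypothesis two_neq0 : (2%:R : k) != 0.

Variable C : qfun k -> Prop.
Hypothesis C_even : even_subcoalg C.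

Lemma even_subcoalg_single_even (f : qfun k) (n : nat) :
  C f -> f [:: n] != 0 -> ~~ odd n.
Proof.
move=> Cf fn_neq0; have [[C_qsym _ _ _] C_graded _ C_zeta] := C_even.
have n_gt0 : (0 < n)%N.
  have [_ comp_f] := C_qsym f Cf.
  by have := comp_f _ fn_neq0; rewrite /composition /= andbT.
have := C_zeta _ (C_graded f n Cf); rewrite zetabarQ_homog // zetaQ_homog //.
rewrite -signr_odd; case: (odd n) => // /eqP; rewrite expr1 mulN1r eq_sym.
rewrite -subr_eq0 opprK -mulr2n -mulr_natl mulf_eq0.
by rewrite (negPf two_neq0) (negPf fn_neq0).
Qed.

Lemma even_subcoalg_even (f : qfun k) :
  C f -> supported (fun a => even_comp a) f.
Proof.
move=> Cf a; elim: a f Cf => [//|n a IHa] f Cf.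
have [_ _ C_coalg _] := C_even; have [S [S_in_C coprod_f]] := C_coalg f Cf.
rewrite -[f _]/(coprodQ f ([:: n], a)) coprod_f.
move=> /sum_neq0_exists[[c c'] /S_in_C[Cc Cc']].
rewrite /tens mulf_eq0 negb_or => /andP[cn_neq0 c'a_neq0].
by rewrite /= (even_subcoalg_single_even Cc cn_neq0) (IHa c').
Qed.

End EvenSubcoalgebra.

Lemma Pi_plus_even_span (f : qfun k) :
  (2%:R : k) != 0 -> Pi_plus f -> even_span f.
Proof.
move=> two_neq0 [C [C_even Cf]]; apply/even_spanP; split.
  by have [[C_qsym _ _ _] _ _ _] := C_even; apply: C_qsym.
exact: (even_subcoalg_even two_neq0 C_even Cf).
Qed.

End EvenSpan.

Theorem proposition6p3 (k : fieldType) (hchar : ~~ (2%N \in [pchar k])) :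
  [/\ even_M_free k,
      even_subcoalg (@even_span k) &
      forall f : qfun k, Pi_plus f <-> even_span f].
Proof.
have two_neq0 : (2%:R : k) != 0.
  by apply: contra hchar => two_eq0; rewrite inE /= two_eq0.
split; [exact: even_Mq_free | exact: even_span_subcoalg | move=> f; split].
  exact: Pi_plus_even_span.
by move=> span_f; exists (@even_span k); split; first exact: even_span_subcoalg.
Qed.
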